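(* Let $0\le\alpha<2\pi$, $0\le\beta<\pi/2$, and let $\{a_k\}_{k\in\mathbb Z}$ be a sequence of complex numbers with $a_k=0$ for all $k\le0$, such that $\{a_k\}_{k\ge1}\in\mathrm{GM}$ and $a_k\in S_{\alpha,\beta}$ for all $k\ge1$. Then $\{a_k\}_{k\in\mathbb Z}\in\overline{\mathrm{GM}}$.
   Context: $S_{\alpha,\beta}=\{z\in\mathbb C: z=0\text{ or }|\arg z-\alpha|\le\beta\}$. A sequence $\{a_k\}_{k\ge1}$ belongs to $\mathrm{GM}$ if there exist $C>0$ and $\lambda>1$ such that for every $n\ge1$, $\sum_{k=n}^{2n}|a_k-a_{k+1}|\le\frac Cn\sum_{n/\lambda\le k\le\lambda n}|a_k|$. For a two-sided sequence $a$: $|\Delta a_k|=|a_k-a_{k+1}|$ for $k>0$, $|\Delta a_k|=|a_k-a_{k-1}|$ for $k<0$, $|\Delta a_0|=|a_0-a_1|+|a_0-a_{-1}|$; for $k\ge0$, $\widehat a_{2^k}=\sup_{2^k\le|m|<2^{k+1}}\frac1{|m|+1}|\sum_{j=0}^ma_j|$, where for $m<0$, $\sum_{j=0}^ma_j$ means $\sum_{j=m}^0a_j$; $[\cdot]$ is the floor function. The sequence $a$ belongs to $\overline{\mathrm{GM}}$ if there is $C'>0$ such that for every $n\ge0$, $\sum_{[2^{n-1}]\le|m|<2^n}|\Delta a_m|\le C'\sup_{k\in\mathbb N_0}\min(1,2^{k-n})\widehat a_{2^k}$. *)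

From Stdlib Require Import Reals ZArith Lra Lia.
From Coquelicot Require Import Coquelicot.
Open Scope R_scope.

Definition sector (alpha beta : R) (z : C) : Prop :=
  z = RtoC 0 \/
  exists r theta : R, 0 < r /\ Rabs (theta - alpha) <= beta /\
    z = (r * cos theta, r * sin theta).

Fixpoint sumC (f : nat -> C) (N : nat) : C :=
  match N with
  | O => f O
  | S n => Cplus (sumC f n) (f (S n))
  end.

Fixpoint maxR (f : nat -> R) (N : nat) : R :=
  match N with
  | O => f O
  | S n => Rmax (maxR f n) (f (S n))
  end.

(* The class GM, for a one-sided sequence b indexed by k >= 1 (b 0 is unused). *)
Definition isGM (b : nat -> C) : Prop :=
  exists (Cst lam : R), 0 < Cst /\ 1 < lam /\
    forall n : nat, (1 <= n)%nat ->
      sum_f_R0 (fun i => Cmod (Cminus (b (n + i)%nat) (b (n + i + 1)%nat))) n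
      <= Cst / INR n *
         sum_f_R0 (fun k => if Rle_dec (INR n / lam) (INR k)
                            then if Rle_dec (INR k) (lam * INR n)
                                 then Cmod (b k) else 0
                            else 0)
                  (Z.to_nat (up (lam * INR n))).

Definition Delta (a : Z -> C) (k : Z) : R :=
  if Z.ltb 0 k then Cmod (Cminus (a k) (a (k + 1)%Z))
  else if Z.ltb k 0 then Cmod (Cminus (a k) (a (k - 1)%Z))
  else Cmod (Cminus (a 0%Z) (a 1%Z)) + Cmod (Cminus (a 0%Z) (a (-1)%Z)).

(* sum_{j=0}^m a_j, with the convention sum_{j=m}^0 a_j for m < 0 *)
Definition psum (a : Z -> C) (m : Z) : C :=
  if Z.leb 0 m then sumC (fun i => a (Z.of_nat i)) (Z.to_nat m)
  else sumC (fun i => a (m + Z.of_nat i)%Z) (Z.to_nat (- m)).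

Definition hat_term (a : Z -> C) (m : Z) : R :=
  Cmod (psum a m) / (IZR (Z.abs m) + 1).

(* hat a_{2^k} = sup_{2^k <= |m| < 2^{k+1}} |sum_{j=0}^m a_j| / (|m|+1)
   (a maximum over a finite nonempty set) *)
Definition hat (a : Z -> C) (k : nat) : R :=
  maxR (fun i => Rmax (hat_term a (2 ^ Z.of_nat k + Z.of_nat i)%Z)
                      (hat_term a (- (2 ^ Z.of_nat k + Z.of_nat i))%Z))
       (Z.to_nat (2 ^ Z.of_nat k - 1)).

(* sum of |Delta a_m| over [2^{n-1}] <= |m| < 2^n *)
Definition block_sum (a : Z -> C) (n : nat) : R :=
  let N := (2 ^ Z.of_nat n - 1)%Z in
  let lo := ((2 ^ Z.of_nat n) / 2)%Z in
  sum_f_R0 (fun i => let m := (- N + Z.of_nat i)%Z in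
                     if Z.leb lo (Z.abs m) then Delta a m else 0)
           (Z.to_nat (2 * N)).

(* The class bar GM; the supremum over k is taken in the extended reals. *)
Definition barGM (a : Z -> C) : Prop :=
  exists Cst : R, 0 < Cst /\
    forall n : nat,
      Rbar_le (Finite (block_sum a n))
        (Rbar_mult (Finite Cst)
           (Lub_Rbar (fun x => exists k : nat,
              x = Rmin 1 (powerRZ 2 (Z.of_nat k - Z.of_nat n)) * hat a k))).

(* Since a vanishes on the non-positive integers, the dyadic block of |Δa| of
   index n+1 reduces to the increments |a_m - a_(m+1)|, 2^n <= m < 2^(n+1),
   which GM bounds by (C/2^n) Σ_(k <= λ 2^n) |a_k|.  Projected onto the
   direction α, each a_k of the sector keeps at least cos β |a_k|, so
   cos β Σ_(k <= M) |a_k| <= |Σ_(k <= M) a_k| = (M+1) · average, and the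
   average is at most hat a_(2^k) for 2^k <= M < 2^(k+1).  As M >= 2^n we get
   k >= n, so the weight min(1, 2^(k-n-1)) is at least 1/2. *)
From Pilot Require Import Defs.
From Stdlib Require Import Reals ZArith Lra Lia.
From Coquelicot Require Import Coquelicot.
Open Scope R_scope.

Definition proj_dir (al : R) (z : C) : R := cos al * fst z + sin al * snd z.

Lemma proj_dir_le_Cmod al z : proj_dir al z <= Cmod z.
Proof.
  destruct z as [x y]; unfold proj_dir; simpl.
  assert (Hs := Cmod_ge_0 (x, y)).
  assert (Hsq : Cmod (x, y) * Cmod (x, y) = x ^ 2 + y ^ 2).
  { unfold Cmod; apply sqrt_sqrt; simpl; nra. }
  assert (Hc := sin2_cos2 al); unfold Rsqr in Hc.
  set (p := cos al * x + sin al * y); set (s := Cmod (x, y)) in *.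
  assert (Hp : p * p <= s * s).
  { rewrite Hsq; unfold p; pose proof (pow2_ge_0 (cos al * y - sin al * x)); nra. }
  destruct (Rle_dec p 0); nra.
Qed.

Lemma Cmod_polar r th : 0 < r -> Cmod (r * cos th, r * sin th) = r.
Proof.
  intros Hr; unfold Cmod; cbn [fst snd].
  replace ((r * cos th) ^ 2 + (r * sin th) ^ 2) with (r ^ 2 * (sin th ^ 2 + cos th ^ 2))
    by ring.
  assert (Hc := sin2_cos2 th); unfold Rsqr in Hc.
  replace (sin th ^ 2 + cos th ^ 2) with 1 by lra.
  rewrite Rmult_1_r; apply sqrt_pow2; lra.
Qed.

Lemma sector_Cmod_le_proj_dir al be z :
  0 <= be < PI / 2 -> sector al be z -> cos be * Cmod z <= proj_dir al z.
Proof.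
  intros Hbe [-> | [r [th [Hr [Hth ->]]]]].
  - rewrite Cmod_0; unfold proj_dir, RtoC; simpl; lra.
  - rewrite Cmod_polar by exact Hr; unfold proj_dir; simpl.
    replace (cos al * (r * cos th) + sin al * (r * sin th)) with (r * cos (th - al))
      by (rewrite cos_minus; ring).
    assert (cos be <= cos (th - al)).
    { replace (cos (th - al)) with (cos (Rabs (th - al)))
        by (unfold Rabs; destruct (Rcase_abs (th - al)); [apply cos_neg | reflexivity]).
      pose proof PI_RGT_0; pose proof (Rabs_pos (th - al)); apply cos_decr_1; lra. }
    nra.
Qed.

Lemma proj_dir_sumC al f M :
  proj_dir al (sumC f M) = sum_f_R0 (fun i => proj_dir al (f i)) M.
Proof.
  induction M as [|M IH]; simpl; [reflexivity|].
  rewrite <- IH; unfold proj_dir; destruct (sumC f M), (f (S M)); simpl; ring.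
Qed.

Lemma sector_sum_Cmod_le al be f M :
  0 <= be < PI / 2 -> (forall i, (i <= M)%nat -> sector al be (f i)) ->
  cos be * sum_f_R0 (fun i => Cmod (f i)) M <= Cmod (sumC f M).
Proof.
  intros Hbe Hf; eapply Rle_trans; [| apply (proj_dir_le_Cmod al)].
  rewrite proj_dir_sumC, scal_sum; apply sum_Rle; intros i Hi.
  rewrite Rmult_comm; apply sector_Cmod_le_proj_dir; auto.
Qed.

Lemma maxR_ge f N i : (i <= N)%nat -> f i <= maxR f N.
Proof.
  induction N as [|N IH]; intros Hi; simpl.
  - replace i with 0%nat by lia; lra.
  - destruct (Nat.eq_dec i (S N)) as [-> | Hne]; [apply Rmax_r|].
    eapply Rle_trans; [apply IH; lia | apply Rmax_l].
Qed.

Lemma hat_term_ge0 a m : 0 <= hat_term a m.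
Proof.
  unfold hat_term; apply Rdiv_le_0_compat; [apply Cmod_ge_0|].
  assert (0 <= IZR (Z.abs m)) by (apply IZR_le; lia); lra.
Qed.

Lemma hat_term_le_hat a M : (1 <= M)%nat ->
  hat_term a (Z.of_nat M) <= hat a (Nat.log2 M).
Proof.
  intros HM; destruct (Nat.log2_spec M ltac:(lia)) as [Hlo Hhi].
  set (k := Nat.log2 M) in *; unfold hat.
  replace (2 ^ Z.of_nat k)%Z with (Z.of_nat (2 ^ k)) by (rewrite Nat2Z.inj_pow; reflexivity).
  eapply Rle_trans; [| apply (maxR_ge _ _ (M - 2 ^ k)%nat)]; simpl.
  - replace (Z.of_nat (2 ^ k) + Z.of_nat (M - 2 ^ k))%Z with (Z.of_nat M) by lia.
    apply Rmax_l.
  - rewrite Nat.pow_succ_r' in Hhi; lia.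
Qed.

Lemma hat_ge0 a k : 0 <= hat a k.
Proof.
  unfold hat; eapply Rle_trans; [| apply (maxR_ge _ _ 0%nat); lia]; cbv beta.
  eapply Rle_trans; [apply hat_term_ge0 | apply Rmax_l].
Qed.

Lemma Cmod_sumC_eq_hat_term a M :
  Cmod (sumC (fun i => a (Z.of_nat i)) M) = (INR M + 1) * hat_term a (Z.of_nat M).
Proof.
  unfold hat_term, psum.
  replace (Z.leb 0 (Z.of_nat M)) with true by (symmetry; apply Z.leb_le; lia).
  rewrite Nat2Z.id, Z.abs_eq, <- INR_IZR_INZ by lia.
  field; pose proof (pos_INR M); lra.
Qed.

Lemma dyadic_weight_ge_half k n : (n <= S k)%nat ->
  1 / 2 <= Rmin 1 (powerRZ 2 (Z.of_nat k - Z.of_nat n)).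
Proof.
  intros Hnk; apply Rmin_glb; [lra|].
  destruct (Z.of_nat k - Z.of_nat n)%Z as [|p|p] eqn:Hz; simpl.
  - lra.
  - pose proof (pow_R1_Rle 2 (Pos.to_nat p) ltac:(lra)); lra.
  - assert (p = 1%positive) by lia; subst; simpl; lra.
Qed.

Lemma Rbar_le_mult_Lub_Rbar (E : R -> Prop) x c e :
  0 < c -> E e -> x <= c * e -> Rbar_le (Finite x) (Rbar_mult (Finite c) (Lub_Rbar E)).
Proof.
  intros Hc He Hx; destruct (Lub_Rbar_correct E) as [Hub _].
  specialize (Hub e He).
  destruct (Lub_Rbar E) as [l | |]; simpl in *; [nra | | contradiction].
  unfold Rbar_mult, Rbar_mult'.
  destruct (Rle_dec 0 c) as [Hc' | Hc']; [|lra].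
  destruct (Rle_lt_or_eq_dec 0 c Hc'); [exact I | lra].
Qed.

Section VanishingOnNonpositive.

Variable a : Z -> C.
Hypothesis a_nonpos : forall k : Z, (k <= 0)%Z -> a k = RtoC 0.

Lemma Delta_neg m : (m < 0)%Z -> Defs.Delta a m = 0.
Proof.
  intros Hm; unfold Defs.Delta.
  replace (Z.ltb 0 m) with false by (symmetry; apply Z.ltb_ge; lia).
  replace (Z.ltb m 0) with true by (symmetry; apply Z.ltb_lt; lia).
  rewrite !a_nonpos by lia; unfold Cminus; rewrite Cplus_opp_r; apply Cmod_0.
Qed.

Lemma block_sum_0 : block_sum a 0 = 2 * hat_term a 1.
Proof.
  unfold block_sum, hat_term, psum, Defs.Delta; simpl.
  rewrite (a_nonpos 0%Z), (a_nonpos (-1)%Z) by lia.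
  unfold Cminus; rewrite Cplus_opp_r, Cmod_0, !Cplus_0_l, Cmod_opp; field.
Qed.

(* The block of index n+1 is -(2P-1) <= m <= 2P-1 with P = 2^n, filtered by
   |m| >= P; the negative indices vanish and the positive ones are the first
   P of the P+1 increments in the GM sum at P. *)
Lemma block_sum_succ_le_increments n :
  block_sum a (S n) <=
  sum_f_R0 (fun i => Cmod (Cminus (a (Z.of_nat (2 ^ n + i)))
                                  (a (Z.of_nat (2 ^ n + i + 1))))) (2 ^ n).
Proof.
  unfold block_sum; cbv zeta; set (P := (2 ^ n)%nat).
  assert (HP : (1 <= P)%nat) by (pose proof (Nat.pow_nonzero 2 n); unfold P; lia).
  replace (2 ^ Z.of_nat (S n))%Z with (Z.of_nat (2 * P))
    by (unfold P; rewrite <- Nat.pow_succ_r', Nat2Z.inj_pow; reflexivity).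
  replace (Z.to_nat (2 * (Z.of_nat (2 * P) - 1))) with (4 * P - 2)%nat by lia.
  replace (Z.of_nat (2 * P) / 2)%Z with (Z.of_nat P) by (apply Z.div_unique_exact; lia).
  rewrite (tech2 _ (3 * P - 2) (4 * P - 2)) by lia.
  rewrite sum_eq_R0, Rplus_0_l.
  2:{ intros i Hi.
      destruct (Z.ltb_spec (- (Z.of_nat (2 * P) - 1) + Z.of_nat i) 0).
      - destruct (Z.leb _ _); [apply Delta_neg; lia | reflexivity].
      - replace (Z.leb _ _) with false; [reflexivity|].
        symmetry; apply Z.leb_gt; lia. }
  replace (4 * P - 2 - S (3 * P - 2))%nat with (P - 1)%nat by lia.
  set (g := fun i : nat => Cmod (a (Z.of_nat (P + i)) - a (Z.of_nat (P + i + 1)))).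
  replace (sum_f_R0 g P) with (sum_f_R0 g (P - 1) + g P)
    by (replace P with (S (P - 1)) at 3 by lia; simpl; do 3 f_equal; lia).
  assert (0 <= g P) by apply Cmod_ge_0.
  apply Rle_trans with (sum_f_R0 g (P - 1)); [right | lra].
  apply sum_eq; intros j Hj.
  replace (- (Z.of_nat (2 * P) - 1) + Z.of_nat (S (3 * P - 2) + j))%Z
    with (Z.of_nat (P + j)) by lia.
  replace (Z.leb (Z.of_nat P) (Z.abs (Z.of_nat (P + j)))) with true
    by (symmetry; apply Z.leb_le; lia).
  unfold Defs.Delta; replace (Z.ltb 0 (Z.of_nat (P + j))) with true
    by (symmetry; apply Z.ltb_lt; lia).
  unfold g; do 3 f_equal; lia.
Qed.

End VanishingOnNonpositive.

Definition gm_window (b : nat -> C) (lam : R) (n k : nat) : R :=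
  if Rle_dec (INR n / lam) (INR k)
  then if Rle_dec (INR k) (lam * INR n) then Cmod (b k) else 0
  else 0.

Lemma gm_window_sum_le b lam n M : lam * INR n < INR (S M) ->
  sum_f_R0 (gm_window b lam n) (S M) <= sum_f_R0 (fun k => Cmod (b k)) M.
Proof.
  intros HM; rewrite tech5.
  replace (gm_window b lam n (S M)) with 0
    by (unfold gm_window; destruct Rle_dec; [destruct Rle_dec; [lra|]|]; reflexivity).
  rewrite Rplus_0_r; apply sum_Rle; intros k _; unfold gm_window.
  pose proof (Cmod_ge_0 (b k)).
  destruct Rle_dec; [destruct Rle_dec|]; lra.
Qed.

Lemma up_nat_bounds x : 0 <= x -> x < INR (Z.to_nat (up x)) <= x + 1.
Proof.
  intros Hx; destruct (archimed x) as [Hup1 Hup2].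
  rewrite INR_IZR_INZ, Z2Nat.id by (apply le_IZR; lra); lra.
Qed.

Lemma block_sum_succ_le_hat al be C lam a n :
  0 <= be < PI / 2 -> 0 <= C -> 1 < lam ->
  (forall k : Z, (k <= 0)%Z -> a k = RtoC 0) ->
  (forall k : nat, (1 <= k)%nat -> sector al be (a (Z.of_nat k))) ->
  sum_f_R0 (fun i => Cmod (Cminus (a (Z.of_nat (2 ^ n + i)))
                                  (a (Z.of_nat (2 ^ n + i + 1))))) (2 ^ n)
    <= C / INR (2 ^ n) * sum_f_R0 (gm_window (fun k => a (Z.of_nat k)) lam (2 ^ n))
                                  (Z.to_nat (up (lam * INR (2 ^ n)))) ->
  exists k, (n <= k)%nat /\ block_sum a (S n) <= C * (lam + 1) / cos be * hat a k.
Proof.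
  intros Hbe HC Hlam Hnonpos Hsec HGM.
  set (P := (2 ^ n)%nat) in HGM.
  assert (HP1 : (1 <= P)%nat) by (pose proof (Nat.pow_nonzero 2 n); unfold P; lia).
  assert (HP : 1 <= INR P) by (apply (le_INR 1); exact HP1).
  assert (Hcos : 0 < cos be) by (apply cos_gt_0; pose proof PI_RGT_0; lra).
  destruct (up_nat_bounds (lam * INR P)) as [Hlo Hhi]; [nra|].
  destruct (Z.to_nat (up (lam * INR P))) as [|M] eqn:HU; [simpl in Hlo; nra|].
  rewrite S_INR in Hhi.
  assert (HPM : (P <= M)%nat) by (apply Nat.lt_succ_r, INR_lt; nra).
  exists (Nat.log2 M); split; [apply Nat.log2_le_pow2; [lia | exact HPM]|].
  assert (Hsum : cos be * sum_f_R0 (fun k => Cmod (a (Z.of_nat k))) M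
                 <= (INR M + 1) * hat a (Nat.log2 M)).
  { eapply Rle_trans; [| apply Rmult_le_compat_l;
      [pose proof (pos_INR M); lra | apply (hat_term_le_hat a M); lia]].
    rewrite <- Cmod_sumC_eq_hat_term.
    apply (sector_sum_Cmod_le al); [exact Hbe|]; intros [|i] _; [left; apply Hnonpos; lia|].
    apply Hsec; lia. }
  pose proof (hat_ge0 a (Nat.log2 M)).
  eapply Rle_trans; [apply block_sum_succ_le_increments; exact Hnonpos|].
  eapply Rle_trans; [exact HGM|].
  eapply Rle_trans.
  { apply Rmult_le_compat_l; [apply Rdiv_le_0_compat; lra|].
    apply gm_window_sum_le; exact Hlo. }
  apply (Rmult_le_reg_l (cos be * INR P)); [nra|].
  replace (cos be * INR P * (C / INR P * sum_f_R0 (fun k => Cmod (a (Z.of_nat k))) M))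
    with (C * (cos be * sum_f_R0 (fun k => Cmod (a (Z.of_nat k))) M)) by (field; lra).
  replace (cos be * INR P * (C * (lam + 1) / cos be * hat a (Nat.log2 M)))
    with (C * ((lam + 1) * INR P * hat a (Nat.log2 M))) by (field; lra).
  apply Rmult_le_compat_l; [exact HC|].
  eapply Rle_trans; [exact Hsum|]; apply Rmult_le_compat_r; nra.
Qed.

Theorem mainTheorem13 (alpha beta : R) (a : Z -> C) :
  0 <= alpha < 2 * PI ->
  0 <= beta < PI / 2 ->
  (forall k : Z, (k <= 0)%Z -> a k = RtoC 0) ->
  isGM (fun k : nat => a (Z.of_nat k)) ->
  (forall k : nat, (1 <= k)%nat -> sector alpha beta (a (Z.of_nat k))) ->
  barGM a.
Proof.
  intros _ Hbeta Hnonpos [C [lam [HC [Hlam HGM]]]] Hsec.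
  set (K := Rmax 2 (C * (lam + 1) / cos beta)).
  assert (HK : 2 <= K) by apply Rmax_l.
  exists (2 * K); split; [lra|]; intros n.
  assert (Hblock : exists k, (n <= S k)%nat /\ block_sum a n <= K * hat a k).
  { destruct n as [|n].
    - exists 0%nat; split; [lia|].
      rewrite block_sum_0 by exact Hnonpos.
      assert (Hh : hat_term a 1 <= hat a 0) by (unfold hat; apply Rmax_l).
      pose proof (hat_term_ge0 a 1); nra.
    - assert (HP : (1 <= 2 ^ n)%nat) by (pose proof (Nat.pow_nonzero 2 n); lia).
      destruct (block_sum_succ_le_hat alpha beta C lam a n Hbeta ltac:(lra) Hlam
                  Hnonpos Hsec (HGM _ HP)) as [k [Hnk Hk]].
      exists k; split; [lia|].
      eapply Rle_trans; [exact Hk | apply Rmult_le_compat_r; [apply hat_ge0 | apply Rmax_r]]. }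
  destruct Hblock as [k [Hnk Hk]].
  apply (Rbar_le_mult_Lub_Rbar _ _ _ (Rmin 1 (powerRZ 2 (Z.of_nat k - Z.of_nat n)) * hat a k));
    [lra | exists k; reflexivity |].
  pose proof (dyadic_weight_ge_half k n Hnk); pose proof (hat_ge0 a k).
  set (w := Rmin 1 _) in *.
  pose proof (Rmult_le_pos (K * hat a k) (2 * w - 1) ltac:(nra) ltac:(lra)); nra.
Qed.
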